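(* Let $f:(\mathbb R^2,q)\to(\mathbb R^3,p)$ be a smooth map germ with a corank 1 singularity at $q$, with curvature parabola $\Delta_p$, axial vector $v_a$, adapted frame $\{v_a,\nu_2\}$ and axial normal curvature function $K_{v_a}(y)=\langle\eta(y),v_a\rangle$, and suppose $\kappa_a(p)$ is defined. Then $\kappa_a(p)=0$ if and only if either $\Delta_p$ is a point, or $\eta(y_0)$ is parallel to $\nu_2$, where $y_0$ is a critical point of $K_{v_a}$.
   Context: Let $f:(\mathbb R^2,q)\to(\mathbb R^3,p)$ be a smooth germ with $\operatorname{rank} df_q=1$; $M$ is its image. $T_pM=\operatorname{im} df_q$ and $N_pM$ is its orthogonal complement (normal plane), with a fixed orientation. The first fundamental form is $I(X,Y)=\langle df_q X,df_qY\rangle$ on $T_q\mathbb R^2$. The second fundamental form $II:T_q\mathbb R^2\times T_q\mathbb R^2\to N_pM$ is the symmetric bilinear map with $II(\partial_u,\partial_u)=f_{uu}(q)^\perp$, $II(\partial_u,\partial_v)=f_{uv}(q)^\perp$, $II(\partial_v,\partial_v)=f_{vv}(q)^\perp$ ($\perp$ = orthogonal projection onto $N_pM$). With $C_q=\{X: I(X,X)=1\}$, the curvature parabola is $\Delta_p=\{II(X,X):X\in C_q\}$. Choosing coordinates with $f_v(q)=0$, $|f_u(q)|=1$, $C_q=\{\pm(\partial_u+y\partial_v)\}$ and $\Delta_p$ is parametrized by $\eta(y)=II(\partial_u+y\partial_v,\partial_u+y\partial_v)$, $y\in\mathbb R$; $\Delta_p$ is a non-degenerate parabola, a half-line, a line,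 or a point. If $\Delta_p$ is a line or half-line, set $\eta(y_\infty)=\eta'(y)/|\eta'(y)|$ for any $y>0$ with $\eta'(y)\neq0$. Axial vector $v_a\in N_pM$: if $\Delta_p$ is a non-degenerate parabola, let $v_d$ be the unit vector in the direction of its directrix and $v_a$ the unit vector with $\{v_a,v_d\}$ a positively oriented orthonormal frame (so $v_a$ points along the axis of symmetry towards the interior of the parabola); if $\Delta_p$ is a line or half-line, $v_a=\eta(y_\infty)$; if $\Delta_p$ is a point other than the origin, $v_a$ is such that $\{v_a,\eta/|\eta|\}$ is a positively oriented orthonormal frame; if $\Delta_p$ is the origin, $v_a$ is any unit vector. The adapted frame is $\{v_a,\nu_2\}$, the positively oriented orthonormal frame of $N_pM$ containing $v_a$. The axial curvature is $\kappa_a(p)=\min\{\langle\eta(y),v_a\rangle: y\in\mathbb R\}$, when this minimum exists (it does not when $\Delta_p$ is a line). *)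

From HB Require Import structures.
From mathcomp Require Import all_boot all_order all_algebra.
From mathcomp Require Import all_classical all_reals all_analysis.
Set Implicit Arguments. Unset Strict Implicit. Unset Printing Implicit Defensive.
Import Order.TTheory GRing.Theory Num.Theory.
Import numFieldNormedType.Exports.
Local Open Scope classical_set_scope.
Local Open Scope ring_scope.

Section CurvatureParabola.
Variable R : realType.
Notation V2 := 'rV[R]_2.
Notation V3 := 'rV[R]_3.

Definition dot (u v : V3) : R := (u *m v^T) 0 0.
Definition enorm (u : V3) : R := Num.sqrt (dot u u).
Definition det3 (t x y : V3) : R :=
    t 0 0 * (x 0 1 * y 0 2 - x 0 2 * y 0 1)
  - t 0 1 * (x 0 0 * y 0 2 - x 0 2 * y 0 0)
  + t 0 2 * (x 0 0 * y 0 1 - x 0 1 * y 0 0).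

Definition e_u : V2 := delta_mx 0 0.
Definition e_v : V2 := delta_mx 0 1.

Fixpoint Dn (l : seq V2) (f : V2 -> V3) : V2 -> V3 :=
  match l with [::] => f | v :: l' => 'D_v (Dn l' f) end.
Definition smooth_germ (f : V2 -> V3) (q : V2) : Prop :=
  forall l : seq V2, \forall x \near q, differentiable (Dn l f) x.

Definition f_u (f : V2 -> V3) (q : V2) := 'D_e_u f q.
Definition f_v (f : V2 -> V3) (q : V2) := 'D_e_v f q.
Definition f_uu (f : V2 -> V3) (q : V2) := 'D_e_u ('D_e_u f) q.
Definition f_uv (f : V2 -> V3) (q : V2) := 'D_e_v ('D_e_u f) q.
Definition f_vv (f : V2 -> V3) (q : V2) := 'D_e_v ('D_e_v f) q.

Definition dfq (f : V2 -> V3) (q : V2) (X : V2) : V3 := X 0 0 *: f_u f q + X 0 1 *: f_v f q.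

Definition Ifirst (f : V2 -> V3) (q : V2) (X Y : V2) : R := dot (dfq f q X) (dfq f q Y).

Definition inN (f : V2 -> V3) (q : V2) (x : V3) : Prop := forall X : V2, dot x (dfq f q X) = 0.

(** orthogonal projection onto N_pM, in the normalized coordinates
    (f_v(q) = 0, |f_u(q)| = 1) where im df_q = span f_u(q). *)
Definition perp (f : V2 -> V3) (q : V2) (x : V3) : V3 := x - dot x (f_u f q) *: f_u f q.

Definition II (f : V2 -> V3) (q : V2) (X Y : V2) : V3 :=
  X 0 0 * Y 0 0 *: perp f q (f_uu f q)
  + (X 0 0 * Y 0 1 + X 0 1 * Y 0 0) *: perp f q (f_uv f q)
  + X 0 1 * Y 0 1 *: perp f q (f_vv f q).

Definition Delta (f : V2 -> V3) (q : V2) : set V3 :=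
  [set II f q X X | X in [set X | Ifirst f q X X = 1]].

Definition eta_curv (f : V2 -> V3) (q : V2) (y : R) : V3 := II f q (e_u + y *: e_v) (e_u + y *: e_v).

Definition is_point (S : set V3) : Prop := exists P, S = [set P].
Definition is_line (S : set V3) : Prop :=
  exists P d : V3, d != 0 /\ S = [set P + t *: d | t in [set: R]].
Definition is_halfline (S : set V3) : Prop :=
  exists P d : V3, d != 0 /\ S = [set P + t *: d | t in [set t : R | 0 <= t]].
Definition lin_indep (d1 d2 : V3) : Prop :=
  forall a b : R, a *: d1 + b *: d2 = 0 -> a = 0 /\ b = 0.
Definition is_nd_parabola (S : set V3) : Prop :=
  exists P d1 d2 : V3, lin_indep d1 d2 /\
    S = [set P + t *: d1 + t ^+ 2 *: d2 | t in [set: R]].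

(** positively oriented orthonormal frame {x, y} of N_pM; the orientation of
    N_pM is fixed by the boolean o (sign of det(f_u(q), x, y)). *)
Definition pos_frame (f : V2 -> V3) (q : V2) (o : bool) (x y : V3) : Prop :=
  [/\ inN f q x /\ inN f q y, dot x x = 1, dot y y = 1, dot x y = 0 &
      (if o then 0 < det3 (f_u f q) x y else det3 (f_u f q) x y < 0)].

Definition is_axial_vector (f : V2 -> V3) (q : V2) (o : bool) (va : V3) : Prop :=
  [/\ inN f q va, dot va va = 1 &
  [\/ (* non-degenerate parabola: unit vector along the axis, towards the interior
         (the direction d2 in which the parabola opens) *)
      exists P d1 d2 : V3, lin_indep d1 d2 /\
        Delta f q = [set P + t *: d1 + t ^+ 2 *: d2 | t in [set: R]] /\
        va = (enorm d2)^-1 *: d2,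
      (* line or half-line: v_a = eta(y_oo) = eta'(y)/|eta'(y)|, y > 0, eta'(y) <> 0 *)
      (is_line (Delta f q) \/ is_halfline (Delta f q)) /\
        exists y : R, 0 < y /\ derive1 (eta_curv f q) y != 0 /\
          va = (enorm (derive1 (eta_curv f q) y))^-1 *: derive1 (eta_curv f q) y,
      exists P : V3, P != 0 /\ Delta f q = [set P] /\
        pos_frame f q o va ((enorm P)^-1 *: P) |
      Delta f q = [set 0] ]].

Definition K_axial (f : V2 -> V3) (q : V2) (va : V3) (y : R) : R := dot (eta_curv f q y) va.

Definition axial_curvature_is (f : V2 -> V3) (q : V2) (va : V3) (k : R) : Prop :=
  (exists y, K_axial f q va y = k) /\ (forall y, k <= K_axial f q va y).

End CurvatureParabola.

From HB Require Import structures.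
From mathcomp Require Import all_boot all_order all_algebra.
From mathcomp Require Import all_classical all_reals all_analysis.
From mathcomp Require Import ring.
Set Implicit Arguments. Unset Strict Implicit. Unset Printing Implicit Defensive.
Import Order.TTheory GRing.Theory Num.Theory.
Import numFieldNormedType.Exports.
Local Open Scope classical_set_scope.
Local Open Scope ring_scope.

(* Since eta is quadratic in y, so is the axial normal curvature
   K(y) = <eta(y), v_a>.  Its minimum k is attained at a critical point
   (Fermat), and all critical points of a quadratic carry the same value, so
   k = 0 iff K vanishes at some critical point y0, i.e. iff eta(y0) is
   orthogonal to v_a; being also orthogonal to f_u, eta(y0) is then parallel
   to nu_2.  If Delta_p is a point P, eta is constant, which rules out the
   parabola and line cases in the definition of v_a; in the remaining cases
   P = 0 or v_a is chosen orthogonal to P, so again k = <P, v_a> = 0. *)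

Section EuclideanSpace.
Variable R : realType.
Implicit Types (s : R) (u v w t x y : 'rV[R]_3).

Lemma rowP3 u v : u 0 0 = v 0 0 -> u 0 1 = v 0 1 -> u 0 2 = v 0 2 -> u = v.
Proof.
move=> e0 e1 e2; apply/rowP => -[[|[|[|//]]] lti].
- by rewrite (_ : Ordinal lti = 0) //; apply/val_inj.
- by rewrite (_ : Ordinal lti = 1) //; apply/val_inj.
- by rewrite (_ : Ordinal lti = 2) //; apply/val_inj.
Qed.

Lemma dotE u v : dot u v = u 0 0 * v 0 0 + u 0 1 * v 0 1 + u 0 2 * v 0 2.
Proof.
rewrite /dot mxE !big_ord_recr big_ord0 /= !mxE add0r.
by congr (_ + _ + _); congr (u 0 _ * v 0 _); apply/val_inj.
Qed.

Lemma dotC u v : dot u v = dot v u.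
Proof. by rewrite /dot -[u *m v^T]trmxK trmx_mul trmxK mxE. Qed.

Lemma dot0l w : dot 0 w = 0.
Proof. by rewrite /dot mul0mx mxE. Qed.

Lemma dotDl u v w : dot (u + v) w = dot u w + dot v w.
Proof. by rewrite /dot mulmxDl mxE. Qed.

Lemma dotZl s u w : dot (s *: u) w = s * dot u w.
Proof. by rewrite /dot -scalemxAl mxE. Qed.

Lemma dotZr s u w : dot u (s *: w) = s * dot u w.
Proof. by rewrite dotC dotZl dotC. Qed.

Lemma dotBl u v w : dot (u - v) w = dot u w - dot v w.
Proof. by rewrite dotDl -scaleN1r dotZl mulN1r. Qed.

Lemma dotDZl_eq0 s u v w : dot u w = 0 -> dot v w = 0 -> dot (u + s *: v) w = 0.
Proof. by move=> uw vw; rewrite dotDl dotZl uw vw mulr0 addr0. Qed.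

Definition cross u v : 'rV[R]_3 :=
  \row_j [:: u 0 1 * v 0 2 - u 0 2 * v 0 1;
             u 0 2 * v 0 0 - u 0 0 * v 0 2;
             u 0 0 * v 0 1 - u 0 1 * v 0 0]`_j.

(* [cross x y, cross y t, cross t x], divided by [det3 t x y], is the basis
   dual to [t, x, y]. *)
Lemma det3_scale_cross t x y w :
  det3 t x y *: w = dot w t *: cross x y + dot w x *: cross y t + dot w y *: cross t x.
Proof. by apply: rowP3; rewrite !mxE !dotE /det3 /=; ring. Qed.

Lemma det3_orthogonal_eq0 t x y w : det3 t x y != 0 ->
  dot w t = 0 -> dot w x = 0 -> dot w y = 0 -> w = 0.
Proof.
move=> det_neq0 wt wx wy; apply: (scalerI det_neq0).
by rewrite det3_scale_cross wt wx wy !scale0r !addr0 scaler0.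
Qed.

Lemma nd_parabola_neq_point (P d1 d2 P0 : 'rV[R]_3) : lin_indep d1 d2 ->
  [set P + t *: d1 + t ^+ 2 *: d2 | t in [set: R]] != [set P0].
Proof.
move=> indep; apply/eqP => parabola_point.
have at_point s : P + s *: d1 + s ^+ 2 *: d2 = P0.
  by have : [set P0] (P + s *: d1 + s ^+ 2 *: d2) by rewrite -parabola_point; exists s.
have : 1 *: d1 + 1 *: d2 = (P + 1 *: d1 + 1 ^+ 2 *: d2) - (P + 0 *: d1 + 0 ^+ 2 *: d2).
  by apply/rowP => i; rewrite !mxE; ring.
by rewrite !at_point subrr => /indep[/eqP]; rewrite oner_eq0.
Qed.

End EuclideanSpace.

Lemma is_derive_unique (R : numFieldType) (V W : normedModType R) (f : V -> W)
    (x v : V) (df1 df2 : W) :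
  is_derive x v f df1 -> is_derive x v f df2 -> df1 = df2.
Proof.
by move=> d1 d2; rewrite -(derive_val (is_derive := d1)) (derive_val (is_derive := d2)).
Qed.

Section Quadratic.
Variable R : realFieldType.

Lemma is_derive_quadratic (a b c y : R) :
  is_derive y 1 (fun z : R => a + z * b + z ^+ 2 * c) (b + y *+ 2 * c).
Proof. by apply: is_derive_eq; rewrite /GRing.scale /=; ring. Qed.

(* Trapezoid rule, exact for quadratics: [2 (Q y1 - Q y0) = (y1 - y0) (Q' y0 + Q' y1)]. *)
Lemma quadratic_critical_values_eq (a b c y0 y1 : R) :
  b + y0 *+ 2 * c = 0 -> b + y1 *+ 2 * c = 0 ->
  a + y0 * b + y0 ^+ 2 * c = a + y1 * b + y1 ^+ 2 * c.
Proof.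
move=> crit0 crit1.
have : (a + y1 * b + y1 ^+ 2 * c - (a + y0 * b + y0 ^+ 2 * c)) *+ 2
       = (y1 - y0) * ((b + y0 *+ 2 * c) + (b + y1 *+ 2 * c)) by ring.
by rewrite crit0 crit1 addr0 mulr0 => /eqP; rewrite mulrn_eq0 /= subr_eq0 => /eqP ->.
Qed.

End Quadratic.

Section CorankOneGerm.
Variables (R : realType) (f : 'rV[R]_2 -> 'rV[R]_3) (q : 'rV[R]_2).
Implicit Types (va x P : 'rV[R]_3) (y : R).
Local Notation fu := (f_u f q).
Local Notation eta := (eta_curv f q).
Local Notation II_uu := (perp f q (f_uu f q)).
Local Notation II_uv := (perp f q (f_uv f q)).
Local Notation II_vv := (perp f q (f_vv f q)).

Lemma dfq_e_u : dfq f q (e_u R) = fu.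
Proof. by rewrite /dfq /e_u !mxE /= scale1r scale0r addr0. Qed.

Lemma inN_dot_fu x : inN f q x -> dot x fu = 0.
Proof. by move=> /(_ (e_u R)); rewrite dfq_e_u. Qed.

Lemma pos_frame_parallel o va (nu2 : 'rV[R]_3) x : pos_frame f q o va nu2 ->
  dot x fu = 0 -> dot x va = 0 -> x = dot x nu2 *: nu2.
Proof.
move=> [[_ Nnu2] _ nu2_unit va_nu2 oriented] x_fu x_va.
have det_neq0 : det3 fu va nu2 != 0.
  by case: o oriented => ?; [rewrite gt_eqF | rewrite lt_eqF].
apply/eqP; rewrite -subr_eq0; apply/eqP; apply: (det3_orthogonal_eq0 det_neq0).
- by rewrite dotBl dotZl x_fu inN_dot_fu // mulr0 subrr.
- by rewrite dotBl dotZl x_va (dotC nu2) va_nu2 mulr0 subrr.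
- by rewrite dotBl dotZl nu2_unit mulr1 subrr.
Qed.

Lemma eta_curvE y : eta y = II_uu + (y *+ 2) *: II_uv + y ^+ 2 *: II_vv.
Proof.
rewrite /eta_curv /II /e_u /e_v !mxE /= mulr0 mulr1 !addr0 add0r mul1r.
by rewrite scale1r mulr1 mul1r mulr2n expr2.
Qed.

Lemma dot_quadratic (A B C v : 'rV[R]_3) y :
  dot (A + (y *+ 2) *: B + y ^+ 2 *: C) v = dot A v + y * (dot B v *+ 2) + y ^+ 2 * dot C v.
Proof. by rewrite !dotDl !dotZl mulrnAl mulrnAr. Qed.

Lemma K_axialE va y : K_axial f q va y =
  dot II_uu va + y * (dot II_uv va *+ 2) + y ^+ 2 * dot II_vv va.
Proof. by rewrite /K_axial eta_curvE dot_quadratic. Qed.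

Lemma is_derive_K_axial va y :
  is_derive y 1 (K_axial f q va) (dot II_uv va *+ 2 + y *+ 2 * dot II_vv va).
Proof. by rewrite (funext (K_axialE va)); exact: is_derive_quadratic. Qed.

Lemma K_axial_min_critical va (y1 : R) :
  (forall y, K_axial f q va y1 <= K_axial f q va y) -> is_derive y1 1 (K_axial f q va) 0.
Proof.
move=> y1_min; apply: (@derive1_at_min _ _ (y1 - 1) (y1 + 1)).
- by rewrite lerD2l -subr_ge0 opprK.
- by move=> y _; exact: (@ex_derive _ _ _ _ _ _ _ (is_derive_K_axial va y)).
- by rewrite in_itv /= ltrDl ltr01 gtrDl oppr_lt0 ltr01.
- by move=> y _; exact: y1_min.
Qed.

Lemma K_axial_critical_eq va (y0 y1 : R) :
  is_derive y0 1 (K_axial f q va) 0 -> is_derive y1 1 (K_axial f q va) 0 ->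
  K_axial f q va y0 = K_axial f q va y1.
Proof.
move=> crit0 crit1; rewrite !K_axialE; apply: quadratic_critical_values_eq.
- exact: is_derive_unique (is_derive_K_axial va y0) crit0.
- exact: is_derive_unique (is_derive_K_axial va y1) crit1.
Qed.

Hypotheses (fv0 : f_v f q = 0) (fu_unit : dot fu fu = 1).

Lemma dot_perp_fu x : dot (perp f q x) fu = 0.
Proof. by rewrite /perp dotBl dotZl fu_unit mulr1 subrr. Qed.

Lemma dot_eta_fu y : dot (eta y) fu = 0.
Proof.
rewrite eta_curvE; apply: dotDZl_eq0; first apply: dotDZl_eq0.
all: exact: dot_perp_fu.
Qed.

Lemma eta_in_Delta y : Delta f q (eta y).
Proof.
exists (e_u R + y *: e_v R) => //.
by rewrite /= /Ifirst /dfq fv0 scaler0 addr0 !mxE /= mulr0 addr0 scale1r.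
Qed.

Lemma Delta_point_eta P : Delta f q = [set P] -> forall y, eta y = P.
Proof. by move=> Delta_P y; have := eta_in_Delta y; rewrite Delta_P. Qed.

Lemma axial_vector_point_orth o va P :
  is_axial_vector f q o va -> Delta f q = [set P] -> dot P va = 0.
Proof.
move=> [_ _ axial] Delta_P; have eta_P := Delta_point_eta Delta_P.
case: axial => [[P' [d1 [d2 [indep [Delta_parabola _]]]]] | [_ [y [_ [eta'_neq0 _]]]]
              | [P0 [_ [Delta_P0 frame]]] | Delta_0].
- by have := nd_parabola_neq_point P' P indep; rewrite -Delta_parabola Delta_P eqxx.
- by move: eta'_neq0; rewrite (funext eta_P) derive1_cst eqxx.
- have <- : P0 = P by rewrite -(Delta_point_eta Delta_P0 0) eta_P.
  case: frame => _ _ unit_P0 /eqP; rewrite dotZr mulf_eq0 dotC => /orP[/eqP inv0|/eqP //].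
  by move: unit_P0; rewrite inv0 scale0r dot0l => /eqP; rewrite eq_sym oner_eq0.
- by rewrite -(eta_P 0) (Delta_point_eta Delta_0 0) dot0l.
Qed.

End CorankOneGerm.

Unset Implicit Arguments.

Theorem mainTheorem1 (R : realType) (f : 'rV[R]_2 -> 'rV[R]_3) (q : 'rV[R]_2)
    (o : bool) (va nu2 : 'rV[R]_3) (k : R) :
  smooth_germ f q ->
  f_v f q = 0 -> dot (f_u f q) (f_u f q) = 1 ->
  is_axial_vector f q o va ->
  pos_frame f q o va nu2 ->
  axial_curvature_is f q va k ->
  (k = 0 <->
     (is_point (Delta f q) \/
      exists y0 : R, is_derive y0 1 (K_axial f q va) 0 /\
        exists l : R, eta_curv f q y0 = l *: nu2)).
Proof.
move=> _ fv0 fu_unit axial frame [[y1 K_y1] K_min].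
have crit_y1 : is_derive y1 1 (K_axial f q va) 0.
  by apply: K_axial_min_critical => y; rewrite K_y1; exact: K_min.
split=> [k0 | [[P Delta_P] | [y0 [crit_y0 [l eta_y0]]]]].
- right; exists y1; split=> //; exists (dot (eta_curv f q y1) nu2).
  apply: pos_frame_parallel frame _ _; first exact: dot_eta_fu.
  by rewrite -k0 -K_y1.
- rewrite -K_y1 /K_axial (Delta_point_eta fv0 fu_unit Delta_P).
  by rewrite (axial_vector_point_orth fv0 fu_unit axial Delta_P).
- have [_ _ _ va_nu2 _] := frame.
  rewrite -K_y1 -(K_axial_critical_eq crit_y0 crit_y1) /K_axial eta_y0.
  by rewrite dotZl dotC va_nu2 mulr0.
Qed.
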